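(* Let $\nu_{AB}$ be a density operator on $\mathbb{C}^2\otimes\mathbb{C}^{d}$ whose marginal $\nu_A=\operatorname{tr}_B\nu_{AB}$ has spectrum $\{\frac{1-\eta}{2},\frac{1+\eta}{2}\}$ for some $\eta\in[0,1)$, and let $\mu_{AB}:=(\nu_A^{-1/2}\otimes\mathbb{1})\nu_{AB}(\nu_A^{-1/2}\otimes\mathbb{1})$. Then $$\mu_{AB}\ge s(\eta)\,\nu_{AB}-t(\eta)\,\frac{\mathbb{1}}{2}\otimes\nu_B,$$ where $\nu_B=\operatorname{tr}_A\nu_{AB}$, $s(\eta):=\frac{2}{\sqrt{1-\eta^2}}$ and $t(\eta):=\frac{4}{\sqrt{1-\eta^2}}-\frac{4}{1+\eta}$.
   Context: The inequality is in the positive semidefinite (Loewner) order. *)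

(* Matrices over an arbitrary numeric closed field C
   (a model of the complex numbers, with conjugation ^* and sqrtC). *)
From HB Require Import structures.
From mathcomp Require Import all_boot all_order all_algebra.
Set Implicit Arguments. Unset Strict Implicit. Unset Printing Implicit Defensive.
Import Order.TTheory GRing.Theory Num.Theory.
Local Open Scope ring_scope.

Section QDefs.
Variable C : numClosedFieldType.

Definition adjmx m n (A : 'M[C]_(m, n)) : 'M[C]_(n, m) := map_mx Num.conj A^T.

Definition psdmx n (A : 'M[C]_n) : Prop :=
  A = adjmx A /\ forall v : 'cV[C]_n, 0 <= (adjmx v *m A *m v) 0 0.

Definition lemx n (A B : 'M[C]_n) : Prop := psdmx (B - A).

Definition density n (A : 'M[C]_n) : Prop := psdmx A /\ \tr A = 1.

(* C^m (x) C^n is identified with C^(m*n) via mxvec_index : 'I_m -> 'I_n -> 'I_(m*n) *)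
Definition idx1 m n (i : 'I_(m * n)) : 'I_m :=
  (enum_val (cast_ord (esym (mxvec_cast m n)) i)).1.
Definition idx2 m n (i : 'I_(m * n)) : 'I_n :=
  (enum_val (cast_ord (esym (mxvec_cast m n)) i)).2.

Definition tensmx m n (A : 'M[C]_m) (B : 'M[C]_n) : 'M[C]_(m * n) :=
  \matrix_(i, j) (A (idx1 i) (idx1 j) * B (idx2 i) (idx2 j)).

Definition ptrB m n (M : 'M[C]_(m * n)) : 'M[C]_m :=
  \matrix_(a, a') \sum_(b < n) M (mxvec_index a b) (mxvec_index a' b).
Definition ptrA m n (M : 'M[C]_(m * n)) : 'M[C]_n :=
  \matrix_(b, b') \sum_(a < m) M (mxvec_index a b) (mxvec_index a b').

Definition s_eta (eta : C) : C := 2 / sqrtC (1 - eta ^+ 2).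
Definition t_eta (eta : C) : C := 4 / sqrtC (1 - eta ^+ 2) - 4 / (1 + eta).

End QDefs.

From HB Require Import structures.
From mathcomp Require Import all_boot all_order all_algebra.
From mathcomp Require Import ring.
Import Order.TTheory GRing.Theory Num.Theory.
Local Open Scope ring_scope.

Set Implicit Arguments.
Unset Strict Implicit.
Unset Printing Implicit Defensive.

(* Diagonalise the PSD matrix X = W diag(c) W^*.  Since X^2 is the inverse of
   nu_A, the numbers c_0^2, c_1^2 are 2/(1-eta) and 2/(1+eta), hence
   c_0 c_1 = s(eta).  Conjugation by W (x) 1 leaves tr_A unchanged, so we may
   assume X = diag(c).  In the 2x2 block form nu = (N_ij), the off-diagonal
   blocks of X nu X and of s nu coincide, and X nu X - s nu + t (1/2 (x) nu_B)
   is block diagonal with blocks (c_i^2 - s + t/2) N_ii + (t/2) N_jj: a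
   nonnegative combination of compressions of nu.  The constants s(eta), t(eta)
   are chosen so that both coefficients c_i^2 - s + t/2 are nonnegative (the one
   for c_i^2 = 2/(1+eta) vanishes). *)

Section Eigenvalues.
Variable F : fieldType.

Lemma eigenvalue_uconj n (V A : 'M[F]_n) a :
  V \in unitmx -> eigenvalue (V *m A *m invmx V) a = eigenvalue A a.
Proof.
move=> Vu; have Vu' : invmx V \in unitmx by rewrite unitmx_inv.
rewrite -conjumx //; apply/idP/idP => [|Aa].
  by apply: eigenvalue_conjmx; rewrite ?stablemx_unit ?row_free_unit.
rewrite -(conjmxK A Vu) in Aa.
by apply: eigenvalue_conjmx Aa; rewrite ?stablemx_unit ?row_free_unit.
Qed.

Lemma eigenvalue0 n (A : 'M[F]_n) : eigenvalue A 0 = (A \notin unitmx).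
Proof.
apply/eigenvalueP/idP => [[v vA v0]|].
  rewrite scale0r in vA; apply: contra v0 => Au.
  by rewrite -(mulmxK Au v) vA mul0mx.
rewrite -row_free_unit -kermx_eq0 => /rowV0Pn[v /sub_kermxP vA v0].
by exists v; rewrite ?vA ?scale0r.
Qed.

Lemma eigenvalue_invmx n (A : 'M[F]_n) a :
  A \in unitmx -> eigenvalue (invmx A) a = eigenvalue A a^-1.
Proof.
move=> Au; have [->|a0] := eqVneq a 0.
  by rewrite invr0 !eigenvalue0 unitmx_inv.
apply/eigenvalueP/eigenvalueP => -[v vA v0]; exists v => //.
  have {1}-> : v = a^-1 *: (v *m invmx A) by rewrite vA scalerA mulVf ?scale1r.
  by rewrite -scalemxAl mulmxKV.
have {1}-> : v = a *: (v *m A) by rewrite vA scalerA divff ?scale1r.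
by rewrite -scalemxAl mulmxK.
Qed.

Lemma eigenvalue_diag n (d : 'rV[F]_n) a :
  eigenvalue (diag_mx d) a = [exists i, d 0 i == a].
Proof.
rewrite eigenvalue_root_char char_poly_trig ?diag_mx_is_trig //.
under eq_bigr => i _ do rewrite mxE eqxx mulr1n.
rewrite -(big_map (fun i => d 0 i) predT (fun x => 'X - x%:P)) root_prod_XsubC.
apply/mapP/existsP => [[i _ ->]|[i /eqP <-]]; exists i => //.
exact: mem_index_enum.
Qed.
End Eigenvalues.

Lemma mulr_pair_eq (R : comNzRingType) (x y a b : R) :
  (forall l, (l == x) || (l == y) = (l == a) || (l == b)) -> x * y = a * b.
Proof.
move=> xy_ab.
have xab : (x == a) || (x == b) by rewrite -xy_ab eqxx.
have yab : (y == a) || (y == b) by rewrite -xy_ab eqxx orbT.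
have axy : (a == x) || (a == y) by rewrite xy_ab eqxx.
have bxy : (b == x) || (b == y) by rewrite xy_ab eqxx orbT.
move: axy bxy; case/orP: xab => /eqP->; case/orP: yab => /eqP->; rewrite ?orbb //.
- by move=> _ /eqP->.
- by rewrite mulrC.
- by move=> /eqP->.
Qed.

Section Adjoint.
Variable C : numClosedFieldType.
Implicit Types (n : nat) (a : C).

Lemma adjmxK m n (A : 'M[C]_(m, n)) : adjmx (adjmx A) = A.
Proof. by apply/matrixP => i j; rewrite !mxE conjCK. Qed.

Lemma adjmxM m n p (A : 'M[C]_(m, n)) (B : 'M[C]_(n, p)) :
  adjmx (A *m B) = adjmx B *m adjmx A.
Proof. by rewrite /adjmx trmx_mul map_mxM. Qed.

Lemma adjmxD m n (A B : 'M[C]_(m, n)) : adjmx (A + B) = adjmx A + adjmx B.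
Proof. by apply/matrixP => i j; rewrite !mxE rmorphD. Qed.

Lemma adjmxZ m n a (A : 'M[C]_(m, n)) : adjmx (a *: A) = a^* *: adjmx A.
Proof. by apply/matrixP => i j; rewrite !mxE rmorphM. Qed.

Lemma adjmx1 n : adjmx (1%:M : 'M[C]_n) = 1%:M.
Proof. by rewrite /adjmx trmx1 map_mx1. Qed.

Lemma adjmx_delta m n (i : 'I_m) (j : 'I_n) :
  adjmx (delta_mx i j : 'M[C]_(m, n)) = delta_mx j i.
Proof.
apply/matrixP => x y; rewrite !mxE.
by case: (y == i); case: (x == j); rewrite /= ?rmorph1 ?rmorph0.
Qed.

Lemma psdmx_congr m n (A : 'M[C]_m) (K : 'M[C]_(m, n)) :
  psdmx A -> psdmx (adjmx K *m A *m K).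
Proof.
move=> [A_herm A_ge0]; split; first by rewrite !adjmxM adjmxK -A_herm mulmxA.
by move=> v; have := A_ge0 (K *m v); rewrite adjmxM !mulmxA.
Qed.

Lemma psdmxD n (A B : 'M[C]_n) : psdmx A -> psdmx B -> psdmx (A + B).
Proof.
move=> [A_herm A_ge0] [B_herm B_ge0]; split; first by rewrite adjmxD -A_herm -B_herm.
by move=> v; rewrite mulmxDr mulmxDl mxE addr_ge0.
Qed.

Lemma psdmxZ n a (A : 'M[C]_n) : 0 <= a -> psdmx A -> psdmx (a *: A).
Proof.
move=> a_ge0 [A_herm A_ge0]; split; first by rewrite adjmxZ geC0_conj // -A_herm.
by move=> v; rewrite -scalemxAr -scalemxAl mxE mulr_ge0.
Qed.

Lemma psdmx_diag_ge0 n (A : 'M[C]_n) i : psdmx A -> 0 <= A i i.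
Proof.
move=> [_ A_ge0]; have := A_ge0 (delta_mx i 0).
by rewrite adjmx_delta -rowE -colE !mxE.
Qed.

Lemma lemx_congr m n (A B : 'M[C]_m) (K : 'M[C]_(m, n)) :
  lemx A B -> lemx (adjmx K *m A *m K) (adjmx K *m B *m K).
Proof. by move=> /(psdmx_congr K); rewrite /lemx mulmxBr mulmxBl. Qed.

Lemma psdmx_unitary_diag n (X : 'M[C]_n) : psdmx X ->
  exists (W : 'M[C]_n) (c : 'rV[C]_n),
    [/\ W *m adjmx W = 1%:M, forall j, 0 <= c 0 j & X = W *m diag_mx c *m adjmx W].
Proof.
move=> psdX; have /orthomx_spectralP eX : X \is normalmx.
  by apply/normalmxP; rewrite -[(X ^t*)%sesqui]/(adjmx X) -(proj1 psdX).
have Pu := spectral_unitarymx X.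
move: eX Pu; set P := spectralmx X; set c := spectral_diag X => eX Pu.
have PP : P *m adjmx P = 1%:M by apply/unitarymxP.
have eX' : X = adjmx P *m diag_mx c *m P by rewrite {1}eX invmx_unitary.
exists (adjmx P), c; split; rewrite ?adjmxK //; first exact: mulmx1C.
move=> j; have := psdmx_diag_ge0 j (psdmx_congr (adjmx P) psdX).
by rewrite adjmxK eX' !mulmxA PP mul1mx -mulmxA PP mulmx1 mxE eqxx mulr1n.
Qed.

Lemma eigenvalue_unitary_diag n (W : 'M[C]_n) (c : 'rV[C]_n) a :
  W *m adjmx W = 1%:M ->
  eigenvalue (W *m diag_mx c *m adjmx W) a = [exists i, c 0 i == a].
Proof.
move=> WW; have Wu : W \in unitmx by case: (mulmx1_unit WW).
rewrite -[adjmx W]/(W ^t*)%sesqui -invmx_unitary; last exact/unitarymxP.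
by rewrite eigenvalue_uconj // eigenvalue_diag.
Qed.
End Adjoint.

Section Tensor.
Variable C : numClosedFieldType.

Lemma idx1_mxvec_index m n (a : 'I_m) (b : 'I_n) : idx1 (mxvec_index a b) = a.
Proof. by rewrite /idx1 /mxvec_index cast_ordK enum_rankK. Qed.

Lemma idx2_mxvec_index m n (a : 'I_m) (b : 'I_n) : idx2 (mxvec_index a b) = b.
Proof. by rewrite /idx2 /mxvec_index cast_ordK enum_rankK. Qed.

Lemma eq_mxvec_index m n (a a' : 'I_m) (b b' : 'I_n) :
  (mxvec_index a b == mxvec_index a' b') = (a == a') && (b == b').
Proof.
apply/eqP/andP => [ab_a'b'|[/eqP-> /eqP->] //].
have := congr1 (@idx1 m n) ab_a'b'; have := congr1 (@idx2 m n) ab_a'b'.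
by rewrite !idx1_mxvec_index !idx2_mxvec_index => -> ->.
Qed.

Lemma sum_mxvec_index m n (F : 'I_(m * n) -> C) :
  \sum_(k < m * n) F k = \sum_(a < m) \sum_(b < n) F (mxvec_index a b).
Proof.
rewrite pair_bigA /= (reindex _ (@curry_mxvec_bij m n)) /=.
by apply: eq_bigr => -[a b].
Qed.

Lemma tensmxE m n (A : 'M[C]_m) (B : 'M[C]_n) a b a' b' :
  tensmx A B (mxvec_index a b) (mxvec_index a' b') = A a a' * B b b'.
Proof. by rewrite mxE !idx1_mxvec_index !idx2_mxvec_index. Qed.

Lemma tensmx_mul m n (A A' : 'M[C]_m) (B B' : 'M[C]_n) :
  tensmx A B *m tensmx A' B' = tensmx (A *m A') (B *m B').
Proof.
apply/matrixP => x y; case/mxvec_indexP: x => a b; case/mxvec_indexP: y => a' b'.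
rewrite tensmxE !mxE sum_mxvec_index big_distrl /=; apply: eq_bigr => i _.
by rewrite big_distrr /=; apply: eq_bigr => j _; rewrite !tensmxE mulrACA.
Qed.

Lemma tensmx1 m n : tensmx (1%:M : 'M[C]_m) (1%:M : 'M[C]_n) = 1%:M.
Proof.
apply/matrixP => x y; case/mxvec_indexP: x => a b; case/mxvec_indexP: y => a' b'.
by rewrite tensmxE !mxE eq_mxvec_index; case: (a == a'); case: (b == b');
  rewrite ?mulr1 ?mulr0.
Qed.

Lemma adjmx_tens m n (A : 'M[C]_m) (B : 'M[C]_n) :
  adjmx (tensmx A B) = tensmx (adjmx A) (adjmx B).
Proof.
apply/matrixP => x y; case/mxvec_indexP: x => a b; case/mxvec_indexP: y => a' b'.
by rewrite tensmxE !mxE !idx1_mxvec_index !idx2_mxvec_index rmorphM.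
Qed.

Lemma tensmx1_conjE m n (A B : 'M[C]_m) (N : 'M[C]_(m * n)) a b a' b' :
  (tensmx A 1%:M *m N *m tensmx B 1%:M) (mxvec_index a b) (mxvec_index a' b') =
  \sum_(i < m) \sum_(j < m) A a i * N (mxvec_index i b) (mxvec_index j b') * B j a'.
Proof.
rewrite mxE sum_mxvec_index [RHS]exchange_big /=; apply: eq_bigr => j _.
rewrite (bigD1 b') //= big1 => [|k kb]; last first.
  by rewrite tensmxE [1%:M _ _]mxE (negPf kb) mulr0n !mulr0.
rewrite addr0 tensmxE [1%:M _ _]mxE eqxx mulr1 mxE sum_mxvec_index big_distrl /=.
apply: eq_bigr => i _; rewrite (bigD1 b) //= big1 => [|k kb]; last first.
  by rewrite tensmxE [1%:M _ _]mxE eq_sym (negPf kb) mulr0n !mulr0 mul0r.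
by rewrite addr0 tensmxE [1%:M _ _]mxE eqxx mulr1.
Qed.

Lemma ptrA_tensmx1_conj m n (A B : 'M[C]_m) (N : 'M[C]_(m * n)) :
  B *m A = 1%:M -> ptrA (tensmx A 1%:M *m N *m tensmx B 1%:M) = ptrA N.
Proof.
move=> BA1; apply/matrixP => b b'; rewrite !mxE.
under eq_bigr => a _ do rewrite tensmx1_conjE.
rewrite exchange_big /=; apply: eq_bigr => i _.
rewrite exchange_big /= (bigD1 i) //= [X in _ + X]big1 => [|j ji].
  have := congr1 (fun M : 'M[C]_m => M i i) BA1; rewrite !mxE eqxx mulr1n => BAii.
  rewrite addr0 -[RHS]mul1r -BAii mulr_suml; apply: eq_bigr => a _; ring.
have := congr1 (fun M : 'M[C]_m => M j i) BA1; rewrite !mxE (negPf ji) mulr0n => BAji.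
rewrite -[RHS](mul0r (N (mxvec_index i b) (mxvec_index j b'))) -[in RHS]BAji mulr_suml.
by apply: eq_bigr => a _; ring.
Qed.

End Tensor.

Lemma sum_ord2 (V : nmodType) (F : 'I_2 -> V) : \sum_(i < 2) F i = F ord0 + F ord_max.
Proof. by rewrite big_ord_recl big_ord1; congr (_ + F _); apply: val_inj. Qed.

Lemma ord2P (i : 'I_2) : i = ord0 \/ i = ord_max.
Proof. by case: i => [[|[|//]] i_lt2]; [left|right]; apply: val_inj. Qed.

Section Qubit.
Variables (C : numClosedFieldType) (d : nat).
Implicit Types (nu : 'M[C]_(2 * d)) (s t : C).

Definition delta_tens (i j : 'I_2) : 'M[C]_(2 * d) := tensmx (delta_mx i j) 1%:M.

Lemma psdmx_delta_tens_conj nu i j :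
  psdmx nu -> psdmx (delta_tens j i *m nu *m delta_tens i j).
Proof.
move=> /(psdmx_congr (delta_tens i j)).
by rewrite /delta_tens adjmx_tens adjmx_delta adjmx1.
Qed.

Lemma tensmx_diag_conj_decomp nu (c : 'rV[C]_2) s t : c 0 ord0 * c 0 ord_max = s ->
  tensmx (diag_mx c) 1%:M *m nu *m tensmx (diag_mx c) 1%:M -
    (s *: nu - t *: tensmx (2^-1 *: 1%:M) (ptrA nu)) =
  (c 0 ord0 ^+ 2 - s + t / 2) *: (delta_tens ord0 ord0 *m nu *m delta_tens ord0 ord0) +
  (c 0 ord_max ^+ 2 - s + t / 2) *:
    (delta_tens ord_max ord_max *m nu *m delta_tens ord_max ord_max) +
  (t / 2) *: (delta_tens ord0 ord_max *m nu *m delta_tens ord_max ord0) +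
  (t / 2) *: (delta_tens ord_max ord0 *m nu *m delta_tens ord0 ord_max).
Proof.
move=> <-; apply/matrixP => x y.
case/mxvec_indexP: x => a b; case/mxvec_indexP: y => a' b'.
do 2 rewrite ![(_ + _ : 'M_(2 * d)) _ _]mxE ![(- _ : 'M_(2 * d)) _ _]mxE.
rewrite ![(_ *: _ : 'M_(2 * d)) _ _]mxE /delta_tens !tensmx1_conjE tensmxE.
rewrite !sum_ord2 !mxE !sum_ord2.
have e01 : (ord0 == ord_max :> 'I_2) = false by [].
have e10 : (ord_max == ord0 :> 'I_2) = false by [].
by case: (ord2P a) => ->; case: (ord2P a') => ->;
  rewrite ?eqxx ?e01 ?e10 /= ?mulr1n ?mulr0n; ring.
Qed.

Lemma lemx_tens_diag nu (c : 'rV[C]_2) s t :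
  psdmx nu -> c 0 ord0 * c 0 ord_max = s -> 0 <= t ->
  0 <= c 0 ord0 ^+ 2 - s + t / 2 -> 0 <= c 0 ord_max ^+ 2 - s + t / 2 ->
  lemx (s *: nu - t *: tensmx (2^-1 *: 1%:M) (ptrA nu))
       (tensmx (diag_mx c) 1%:M *m nu *m tensmx (diag_mx c) 1%:M).
Proof.
move=> psd_nu c01 t_ge0 a0_ge0 a1_ge0.
have t2_ge0 : 0 <= t / 2 by rewrite divr_ge0.
rewrite /lemx (tensmx_diag_conj_decomp _ _ c01).
by do ![apply: psdmxD | apply: psdmxZ => //; exact: psdmx_delta_tens_conj].
Qed.

Lemma lemx_tens_unitary_conj nu (W D : 'M[C]_2) s t (K := tensmx W 1%:M) :
  W *m adjmx W = 1%:M ->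
  lemx (s *: (adjmx K *m nu *m K) -
          t *: tensmx (2^-1 *: 1%:M) (ptrA (adjmx K *m nu *m K)))
       (tensmx D 1%:M *m (adjmx K *m nu *m K) *m tensmx D 1%:M) ->
  lemx (s *: nu - t *: tensmx (2^-1 *: 1%:M) (ptrA nu))
       (tensmx (W *m D *m adjmx W) 1%:M *m nu *m tensmx (W *m D *m adjmx W) 1%:M).
Proof.
move=> WW /(lemx_congr (adjmx K)); rewrite adjmxK.
have adjK : adjmx K = tensmx (adjmx W) 1%:M by rewrite adjmx_tens adjmx1.
have KK : K *m adjmx K = 1%:M by rewrite adjK tensmx_mul WW mulmx1 tensmx1.
have conjK (M : 'M[C]_(2 * d)) : K *m (adjmx K *m M *m K) *m adjmx K = M.
  by rewrite !mulmxA KK mul1mx -mulmxA KK mulmx1.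
have -> : ptrA (adjmx K *m nu *m K) = ptrA nu by rewrite adjK ptrA_tensmx1_conj.
have -> : tensmx (W *m D *m adjmx W) 1%:M = K *m tensmx D 1%:M *m adjmx K.
  by rewrite adjK !tensmx_mul !mulmx1.
have halfK : K *m tensmx (2^-1 *: 1%:M) (ptrA nu) *m adjmx K =
             tensmx (2^-1 *: 1%:M) (ptrA nu).
  by rewrite adjK !tensmx_mul mulmx1 mul1mx -scalemxAr -scalemxAl mulmx1 WW.
rewrite mulmxBr mulmxBl -!scalemxAr -!scalemxAl conjK halfK.
by rewrite !mulmxA.
Qed.

End Qubit.

Section Constants.
Variable C : numClosedFieldType.
Variable eta : C.

Lemma s_eta_sqr : s_eta eta ^+ 2 = ((1 - eta) / 2)^-1 * ((1 + eta) / 2)^-1.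
Proof.
by rewrite /s_eta expr_div_n sqrtCK !invf_div mulf_div -subr_sqr expr1n expr2.
Qed.

Hypotheses (eta_ge0 : 0 <= eta) (eta_lt1 : eta < 1).

Let one_add_gt0 : 0 < 1 + eta.
Proof. by rewrite ltr_wpDr. Qed.
Let one_sub_gt0 : 0 < 1 - eta.
Proof. by rewrite subr_gt0. Qed.
Let sq_gt0 : 0 < sqrtC (1 - eta ^+ 2).
Proof. by rewrite sqrtC_gt0 subr_gt0 exprn_ilt1. Qed.

Lemma s_eta_ge0 : 0 <= s_eta eta.
Proof. by rewrite divr_ge0 ?ltW. Qed.

Lemma sqrtC_le_one_add : sqrtC (1 - eta ^+ 2) <= 1 + eta.
Proof.
have sub_nneg : 1 - eta ^+ 2 \in Num.nneg by rewrite qualifE /= subr_ge0 exprn_ile1 // ltW.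
have add_nneg : (1 + eta) ^+ 2 \in Num.nneg by rewrite qualifE /= exprn_ge0 // ltW.
rewrite -(sqrCK (ltW one_add_gt0)) ler_sqrtC // -subr_ge0.
have -> : (1 + eta) ^+ 2 - (1 - eta ^+ 2) = 2 * eta * (1 + eta) by ring.
by rewrite !mulr_ge0 // ltW.
Qed.

Lemma t_eta_ge0 : 0 <= t_eta eta.
Proof. by rewrite /t_eta subr_ge0 ler_wpM2l // lef_pV2 ?posrE // sqrtC_le_one_add. Qed.

Lemma eta_gap_ge0 mu : (mu == ((1 - eta) / 2)^-1) || (mu == ((1 + eta) / 2)^-1) ->
  0 <= mu - s_eta eta + t_eta eta / 2.
Proof.
have one_add_neq0 : 1 + eta != 0 by rewrite gt_eqF.
have one_sub_neq0 : 1 - eta != 0 by rewrite gt_eqF.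
have sq_neq0 : sqrtC (1 - eta ^+ 2) != 0 by rewrite gt_eqF.
rewrite /s_eta /t_eta; case/orP => /eqP->.
  have -> : ((1 - eta) / 2)^-1 - 2 / sqrtC (1 - eta ^+ 2) +
      (4 / sqrtC (1 - eta ^+ 2) - 4 / (1 + eta)) / 2 = 4 * eta / ((1 - eta) * (1 + eta)).
    by field; rewrite one_add_neq0 one_sub_neq0.
  by rewrite divr_ge0 ?mulr_ge0 // ltW.
suff -> : ((1 + eta) / 2)^-1 - 2 / sqrtC (1 - eta ^+ 2) +
    (4 / sqrtC (1 - eta ^+ 2) - 4 / (1 + eta)) / 2 = 0 by [].
by field; rewrite one_add_neq0 sq_neq0.
Qed.

Lemma eta_spectrum_bounds (x y : C) : 0 <= x -> 0 <= y ->
  (forall l, (l == x ^+ 2) || (l == y ^+ 2) =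
             (l == ((1 - eta) / 2)^-1) || (l == ((1 + eta) / 2)^-1)) ->
  [/\ x * y = s_eta eta, 0 <= x ^+ 2 - s_eta eta + t_eta eta / 2
    & 0 <= y ^+ 2 - s_eta eta + t_eta eta / 2].
Proof.
move=> x_ge0 y_ge0 spec; split; last 2 first.
- by apply: eta_gap_ge0; rewrite -spec eqxx.
- by apply: eta_gap_ge0; rewrite -spec eqxx orbT.
apply/eqP; rewrite -(eqrXn2 (n := 2)) ?s_eta_ge0 ?mulr_ge0 // exprMn s_eta_sqr.
by rewrite (mulr_pair_eq spec).
Qed.
End Constants.

Theorem mainTheorem8 (C : numClosedFieldType) (d : nat)
  (nu : 'M[C]_(2 * d)) (eta : C) (X : 'M[C]_2) :
  density nu ->
  0 <= eta -> eta < 1 ->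
  (forall a : C, eigenvalue (ptrB nu) a = (a == (1 - eta) / 2) || (a == (1 + eta) / 2)) ->
  psdmx X -> X *m X = invmx (ptrB nu) ->
  lemx (s_eta eta *: nu - t_eta eta *: tensmx (2^-1 *: 1%:M) (ptrA nu))
       (tensmx X 1%:M *m nu *m tensmx X 1%:M).
Proof.
move=> [psd_nu _] eta_ge0 eta_lt1 spec_nuA psdX XX_inv.
have [W [c [WW c_ge0 XE]]] := psdmx_unitary_diag psdX.
pose c2 := \row_j c 0 j ^+ 2.
have cc : diag_mx c *m diag_mx c = diag_mx c2.
  by apply/matrixP => i j; rewrite mul_diag_mx !mxE mulrnAr expr2.
have XXE : X *m X = W *m diag_mx c2 *m adjmx W.
  by rewrite XE -cc -!mulmxA (mulmxA (adjmx W) W) (mulmx1C WW) mul1mx.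
have nuA_unit : ptrB nu \in unitmx.
  rewrite -[_ \in _]negbK -eigenvalue0 spec_nuA !(eq_sym 0).
  by rewrite !gt_eqF ?divr_gt0 ?subr_gt0 ?ltr_wpDr.
have spec_c l : (l == c 0 ord0 ^+ 2) || (l == c 0 ord_max ^+ 2) =
                (l == ((1 - eta) / 2)^-1) || (l == ((1 + eta) / 2)^-1).
  have := eigenvalue_unitary_diag c2 l WW.
  rewrite -XXE XX_inv eigenvalue_invmx // spec_nuA -!(can_eq invrK (l^-1)) !invrK.
  move=> ->; apply/orP/existsP => [[]/eqP->|[i]]; rewrite ?mxE.
  - by exists ord0; rewrite mxE.
  - by exists ord_max; rewrite mxE.
  - by move=> /eqP<-; case: (ord2P i) => ->; [left|right].
have [c01 gap0 gap1] := eta_spectrum_bounds eta_ge0 eta_lt1 (c_ge0 _) (c_ge0 _) spec_c.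
rewrite XE; apply: lemx_tens_unitary_conj WW _.
by apply: lemx_tens_diag; rewrite ?t_eta_ge0 //; apply: psdmx_congr.
Qed.
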